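(* Let $n\geqslant 2$, let $A$ be a real symmetric $n\times n$ matrix with eigenvalues $\lambda_1(A)\geqslant\lambda_2(A)\geqslant\dots\geqslant\lambda_n(A)$, and let $X_A:=\{x\in\mathbb{R}^n: xx^\top-A\succeq 0\}$. Then $X_A\neq\emptyset$ if and only if $\lambda_2(A)\leqslant 0$.
   Context: $B\succeq 0$ means the symmetric matrix $B$ is positive semidefinite. *)

From HB Require Import structures.
From mathcomp Require Import all_boot all_order all_algebra.
From mathcomp Require Import reals.
Set Implicit Arguments. Unset Strict Implicit. Unset Printing Implicit Defensive.
Import Order.TTheory GRing.Theory Num.Theory.
Local Open Scope ring_scope.

Definition psdmx (R : realType) (n : nat) (B : 'M[R]_n) : Prop :=
  B^T = B /\ forall v : 'cV[R]_n, 0 <= (v^T *m B *m v) 0 0.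

(* s = [:: λ_1(A); ...; λ_n(A)] is the list of eigenvalues of A counted with
   (algebraic) multiplicity, i.e. the roots of the characteristic polynomial,
   sorted in non-increasing order. *)
Definition eigenvalues_desc (R : realType) (n : nat) (A : 'M[R]_n) (s : seq R) : Prop :=
  size s = n /\ sorted (fun a b => b <= a) s /\
  char_poly A = \prod_(a <- s) ('X - a%:P).

Definition X_set (R : realType) (n : nat) (A : 'M[R]_n) : 'cV[R]_n -> Prop :=
  fun x => psdmx (x *m x^T - A).

(* Diagonalise A = P^* diag(d) P with P unitary over R[i], the eigenvalues d
   being those of A.  If x x^T - A >= 0 and two eigenvalues d_i, d_j are
   positive, some nonzero v supported on the coordinates i, j (in the basis
   given by P) is orthogonal to x, and v^*(x x^T - A)v = -(d_i|v_i|^2 + d_j|v_j|^2)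
   < 0.  Conversely, if at most one eigenvalue is positive, either A <= 0 and
   x = 0 works, or a lambda_1-eigenvector u is supported on the single positive
   coordinate, whence A <= lambda_1 u u^T / |u|^2 and x = sqrt(lambda_1/|u|^2) u
   works. *)

From HB Require Import structures.
From mathcomp Require Import all_boot all_order all_algebra.
From mathcomp Require Import reals complex ring.
Set Implicit Arguments. Unset Strict Implicit. Unset Printing Implicit Defensive.
Import Order.TTheory GRing.Theory Num.Theory Num.Def.
Local Open Scope ring_scope.
Local Open Scope sesquilinear_scope.

(* MathComp's spectral theorem is stated over algebraically closed fields, so
   real matrices are embedded into R[i]. *)
Local Notation toC := (real_complex _).
Local Notation toCmx := (map_mx toC).

Lemma count_gt0_le1_sorted (R : realDomainType) (s : seq R) :
  (1 < size s)%N -> sorted (fun a b => b <= a) s ->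
  (count (fun r : R => (0 < r)%R) s <= 1)%N = (s`_1 <= 0).
Proof.
case: s => [|a [|b t]] //= _ /andP[ba].
rewrite path_sortedE; last exact: rev_trans le_trans.
move=> /andP[/allP t_le_b _].
have [b_le0 | b_gt0] := leP b 0.
  have -> : count (fun r => 0 < r) t = 0%N.
    apply/eqP; rewrite eqn0Ngt -has_count; apply/hasPn => r /t_le_b r_le_b.
    by rewrite -leNgt (le_trans r_le_b).
  by rewrite addn0; case: (0 < a).
by rewrite (lt_le_trans b_gt0 ba).
Qed.

Lemma sorted_le_head (R : realDomainType) (s : seq R) (r : R) :
  sorted (fun a b => b <= a) s -> r \in s -> r <= s`_0.
Proof.
case: s => // a t /= /(order_path_min (rev_trans le_trans))/allP t_le_a.
by rewrite inE => /predU1P[-> // | /t_le_a].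
Qed.

Lemma char_poly_similar (R : comNzRingType) n (Q' Q B : 'M[R]_n) :
  Q' *m Q = 1%:M -> char_poly (Q' *m B *m Q) = char_poly B.
Proof.
move=> QQ; rewrite /char_poly /char_poly_mx !map_mxM.
set Qp := map_mx polyC Q; set Q'p := map_mx polyC Q'.
have QQp : Q'p *m Qp = 1%:M by rewrite -map_mxM QQ map_scalar_mx.
have -> : 'X%:M - Q'p *m map_mx polyC B *m Qp = Q'p *m ('X%:M - map_mx polyC B) *m Qp.
  by rewrite mulmxBr mulmxBl -(mulmxA Q'p 'X%:M) -scalar_mxC mulmxA QQp mul1mx.
by rewrite !det_mulmx mulrAC -det_mulmx QQp det1 mul1r.
Qed.

Lemma trmxC_toCmx (R : realType) m n (M : 'M[R]_(m, n)) : (toCmx M)^t* = toCmx M^T.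
Proof. by apply/matrixP => i j; rewrite !mxE; apply: conjc_real. Qed.

Lemma symmetric_spectral (R : realType) n (A : 'M[R]_n) (s : seq R) :
  A^T = A -> char_poly A = \prod_(a <- s) ('X - a%:P) ->
  exists P : 'M[R[i]]_n, exists d : 'rV[R]_n,
    [/\ P \is unitarymx, toCmx A = P^t* *m diag_mx (toCmx d) *m P
      & perm_eq s [seq d 0 k | k <- enum 'I_n]].
Proof.
move=> A_sym charA.
have /orthomx_spectralP : toCmx A \is normalmx.
  by apply/normalmxP; rewrite trmxC_toCmx A_sym.
set P := spectralmx _; set dC := spectral_diag _.
have P_unitary : P \is unitarymx by apply: spectral_unitarymx.
rewrite invmx_unitary // => AE.
have PtP : P^t* *m P = 1%:M by rewrite -invmx_unitary // mulVmx // unitarymx_unit.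
have dC_s : perm_eq (map toC s) [seq dC 0 k | k <- enum 'I_n].
  apply: prod_XsubC_eq.
  have -> : \prod_(a <- map toC s) ('X - a%:P) = char_poly (toCmx A).
    rewrite -map_char_poly charA rmorph_prod big_map.
    by apply: eq_bigr => a _; apply/esym/map_polyXsubC.
  rewrite AE char_poly_similar //.
  rewrite char_poly_trig ?diag_mx_is_trig // big_map big_enum /=.
  by apply: eq_bigr => k _; rewrite mxE eqxx mulr1n.
have dC_real k : dC 0 k = toC (complex.Re (dC 0 k)).
  have : dC 0 k \in map toC s by rewrite (perm_mem dC_s) map_f ?mem_enum.
  by case/mapP => r _ ->.
exists P, (map_mx (@complex.Re R) dC); split => //.
  suff -> : toCmx (map_mx (@complex.Re R) dC) = dC by [].
  by apply/matrixP => i j; rewrite !mxE ord1 -dC_real.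
apply: (perm_map_inj (@complexI R)); rewrite -map_comp; apply: (perm_trans dC_s).
by under [X in perm_eq _ X]eq_map do rewrite /= mxE -dC_real.
Qed.

Lemma card_set_count (T : finType) (P : pred T) : #|[set k | P k]| = count P (enum T).
Proof. by rewrite cardsE cardE -size_filter /enum_mem filter_predT. Qed.

Lemma qform_outer (R : comPzRingType) n (x v : 'cV[R]_n) :
  (v^T *m (x *m x^T) *m v) 0 0 = ((x^T *m v) 0 0) ^+ 2.
Proof.
rewrite mulmxA -mulmxA [LHS]mxE big_ord1 expr2; congr (_ * _).
by rewrite -[v^T *m x]trmxK trmx_mul trmxK mxE.
Qed.

Lemma X_set_qform_le (R : realType) n (A : 'M[R]_n) (x : 'cV[R]_n) : A^T = A ->
  (forall v : 'cV[R]_n, (v^T *m A *m v) 0 0 <= ((x^T *m v) 0 0) ^+ 2) ->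
  X_set A x.
Proof.
move=> A_sym A_le; split; first by rewrite linearB /= trmx_mul trmxK A_sym.
by move=> v; rewrite mulmxBr mulmxBl mxE [(- _ : 'M_1) 0 0]mxE subr_ge0 qform_outer.
Qed.

Section ComplexForm.
Variable R : realType.

Lemma hermform_toCmx n (M : 'M[R]_n) (v w : 'cV[R]_n) :
  toC ((v^T *m M *m w) 0 0) = ((toCmx v)^t* *m toCmx M *m toCmx w) 0 0.
Proof. by rewrite trmxC_toCmx -!map_mxM [RHS]mxE. Qed.

Lemma hermform_toCmx_sym n (M : 'M[R]_n) (v : 'cV[R[i]]_n) : M^T = M ->
  let a := map_mx (@complex.Re R) v in let b := map_mx (@complex.Im R) v in
  (v^t* *m toCmx M *m v) 0 0 = toC ((a^T *m M *m a) 0 0 + (b^T *m M *m b) 0 0).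
Proof.
move=> M_sym a b.
have vE : v = toCmx a + 'i%C *: toCmx b.
  by apply/matrixP => i j; rewrite !mxE; apply: complexE.
have vtE : v^t* = (toCmx a)^T - 'i%C *: (toCmx b)^T.
  apply/matrixP => i j; rewrite vE !mxE rmorphD rmorphM /=.
  by case: (v j i) => x y; apply/eqP; rewrite eq_complex /=; apply/andP; split; apply/eqP; ring.
have formE (x y : 'cV[R]_n) : (toCmx x)^T *m toCmx M *m toCmx y = toCmx (x^T *m M *m y).
  by rewrite map_trmx -!map_mxM.
have form_sym : b^T *m M *m a = a^T *m M *m b.
  by rewrite [LHS]mx11_scalar -tr_scalar_mx -mx11_scalar !trmx_mul trmxK M_sym mulmxA.
rewrite vtE {1}vE !mulmxBl !mulmxDr -!scalemxAl -!scalemxAr !formE form_sym !mxE.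
by rewrite rmorphD mulrA -expr2 sqr_i; ring.
Qed.

Lemma psdmx_hermform_ge0 n (M : 'M[R]_n) (v : 'cV[R[i]]_n) :
  psdmx M -> 0 <= (v^t* *m toCmx M *m v) 0 0.
Proof. by case=> M_sym M_psd; rewrite hermform_toCmx_sym // ler0c addr_ge0. Qed.

End ComplexForm.

Section SpectralForm.
Variables (R : realType) (n : nat) (A : 'M[R]_n) (P : 'M[R[i]]_n) (d : 'rV[R]_n).
Hypotheses (A_sym : A^T = A) (P_unitary : P \is unitarymx)
  (A_spectral : toCmx A = P^t* *m diag_mx (toCmx d) *m P).

Let PPt : P *m P^t* = 1%:M. Proof. exact/unitarymxP. Qed.
Let PtP : P^t* *m P = 1%:M.
Proof. by rewrite -invmx_unitary // mulVmx // unitarymx_unit. Qed.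

Lemma spectral_hermform (v : 'cV[R[i]]_n) :
  (v^t* *m toCmx A *m v) 0 0 = \sum_k toC (d 0 k) * `|(P *m v) k 0| ^+ 2.
Proof.
have -> : v^t* *m toCmx A *m v = (P *m v)^t* *m diag_mx (toCmx d) *m (P *m v).
  by rewrite A_spectral trmx_mul map_mxM !mulmxA.
rewrite mxE; apply: eq_bigr => k _.
by rewrite mul_mx_diag !mxE normCKC mulrAC mulrC.
Qed.

Lemma spectral_qform (v : 'cV[R]_n) :
  toC ((v^T *m A *m v) 0 0) = \sum_k toC (d 0 k) * `|(P *m toCmx v) k 0| ^+ 2.
Proof. by rewrite hermform_toCmx spectral_hermform. Qed.

Lemma spectral_dot (u v : 'cV[R]_n) :
  toC ((u^T *m v) 0 0) = ((P *m toCmx u)^t* *m (P *m toCmx v)) 0 0.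
Proof.
rewrite trmx_mul map_mxM -mulmxA (mulmxA _ P) PtP mul1mx.
by rewrite trmxC_toCmx -map_mxM [RHS]mxE.
Qed.

Lemma spectral_eigenvector_supp (l : R) (u : 'cV[R]_n) (k : 'I_n) :
  A *m u = l *: u -> (P *m toCmx u) k 0 != 0 -> d 0 k = l.
Proof.
move=> Au; have : diag_mx (toCmx d) *m (P *m toCmx u) = toC l *: (P *m toCmx u).
  have DP : diag_mx (toCmx d) *m P = P *m toCmx A by rewrite A_spectral !mulmxA PPt mul1mx.
  by rewrite mulmxA DP -mulmxA -map_mxM Au map_mxZ -scalemxAr.
move: (P *m toCmx u) => z /matrixP/(_ k 0); rewrite mul_diag_mx !mxE => /mulIf zk /zk.
exact: complexI.
Qed.

Lemma spectral_X_set_card_gt0 (x : 'cV[R]_n) :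
  X_set A x -> (#|[set k | (0 < d 0 k)%R]| <= 1)%N.
Proof.
move=> /psdmx_hermform_ge0 psd; rewrite leqNgt; apply/negP.
case/card_gt1P=> i [j []]; rewrite !inE => di dj ij.
set w := (toCmx x)^T *m P^t*.
(* w is x in spectral coordinates; choose y on the coordinates i, j with w *m y = 0 *)
have [a [b [ab_neq0 ab_w]]] :
    exists a b : R[i], (a != 0) || (b != 0) /\ a * w 0 i + b * w 0 j = 0.
  have [wi0 | wi_neq0] := eqVneq (w 0 i) 0.
    by exists 1, 0; rewrite oner_neq0 wi0 mulr0 mul0r addr0.
  by exists (w 0 j), (- w 0 i); rewrite oppr_eq0 wi_neq0 orbT mulrC mulNr subrr.
pose y : 'cV_n := a *: delta_mx i 0 + b *: delta_mx j 0.
have Pv : P *m (P^t* *m y) = y by rewrite mulmxA PPt mul1mx.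
have xv : (toCmx x)^T *m (P^t* *m y) = 0.
  rewrite mulmxA -/w mulmxDr -!scalemxAr -!colE.
  by clearbody w; apply/matrixP => p q; rewrite !ord1 !mxE ab_w.
have := psd (P^t* *m y).
have -> : toCmx (x *m x^T - A) = toCmx x *m (toCmx x)^T - toCmx A.
  by rewrite map_mxB map_mxM map_trmx.
rewrite mulmxBr mulmxBl -!mulmxA xv !mulmx0 sub0r.
rewrite mulmxA [(- _ : 'M_1) 0 0]mxE spectral_hermform Pv oppr_ge0 => /negP; rewrite lt_geF //.
rewrite (bigD1 i) // (bigD1 j) 1?eq_sym //= big1 => [|k /andP[ki kj]]; last first.
  by rewrite !mxE (negPf ki) (negPf kj) !mulr0 addr0 normr0 expr0n mulr0.
rewrite !mxE !eqxx (negPf ij) eq_sym (negPf ij) !mulr1 !mulr0 !addr0 add0r.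
have term_ge0 r (c : R[i]) : 0 < r -> 0 <= toC r * `|c| ^+ 2.
  by move=> r_gt0; rewrite mulr_ge0 ?exprn_ge0 // ler0c ltW.
have term_gt0 r (c : R[i]) : 0 < r -> c != 0 -> 0 < toC r * `|c| ^+ 2.
  by move=> r_gt0 c_neq0; rewrite mulr_gt0 ?exprn_gt0 ?normr_gt0 // ltcR.
case/orP: ab_neq0 => [a_neq0 | b_neq0].
  by apply: ltr_pwDl; [exact: term_gt0 | exact: term_ge0].
by apply: ltr_wpDl; [exact: term_ge0 | exact: term_gt0].
Qed.

Lemma spectral_X_set0 : (forall k, d 0 k <= 0) -> X_set A 0.
Proof.
move=> d_le0; apply: X_set_qform_le => // v.
rewrite trmx0 mul0mx [X in _ <= X ^+ 2]mxE expr2 mulr0 -lecR spectral_qform.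
by apply: sumr_le0 => k _; rewrite mulr_le0_ge0 ?exprn_ge0 // lecR.
Qed.

Lemma spectral_qform_le_rank1 (l : R) (u v : 'cV[R]_n) :
  (#|[set k | (0 < d 0 k)%R]| <= 1)%N -> 0 < l -> A *m u = l *: u -> u != 0 ->
  (v^T *m A *m v) 0 0 <= l / (u^T *m u) 0 0 * ((u^T *m v) 0 0) ^+ 2.
Proof.
move=> pos_le1 l_gt0 Au u_neq0.
have [k0 zk0] : exists k0, (P *m toCmx u) k0 0 != 0.
  apply/existsP; apply: contraR u_neq0 => /existsPn z0.
  rewrite -(map_mx_eq0 toC) -[toCmx u]mul1mx -PtP -mulmxA.
  suff -> : P *m toCmx u = 0 by rewrite mulmx0.
  by apply/matrixP => i j; rewrite ord1 [RHS]mxE; apply/eqP/negPn/z0.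
have d_k0 : d 0 k0 = l := spectral_eigenvector_supp Au zk0.
have pos_k0 k : 0 < d 0 k -> k = k0.
  by move=> dk; apply: (card_le1_eqP pos_le1); rewrite inE ?d_k0.
have d_le0 k : k != k0 -> d 0 k <= 0.
  by move=> kk0; rewrite leNgt; apply: contra kk0 => /pos_k0 ->.
have z_supp k : k != k0 -> (P *m toCmx u) k 0 = 0.
  move=> kk0; apply/eqP; apply: contraNT kk0 => /(spectral_eigenvector_supp Au) dk.
  by apply/eqP/pos_k0; rewrite dk.
rewrite -lecR spectral_qform.
move: (spectral_dot u u) (spectral_dot u v).
move: (P *m toCmx u) (P *m toCmx v) zk0 z_supp => z y zk0 z_supp.
set nu := (u^T *m u) 0 0; set t := (u^T *m v) 0 0.
have dot_z w : (z^t* *m w) 0 0 = (z k0 0)^* * w k0 0.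
  rewrite mxE (bigD1 k0) //= big1 ?addr0 => [|k kk0]; first by rewrite !mxE.
  by rewrite !mxE z_supp // conjC0 mul0r.
rewrite !dot_z -normCKC => nuE tE.
have nu_neq0 : toC nu != 0 by rewrite nuE sqrf_eq0 normr_eq0.
have yE : `|y k0 0| ^+ 2 = toC t ^+ 2 / toC nu.
  apply: (mulIf nu_neq0); rewrite mulfVK // nuE -exprMn mulrC.
  rewrite -(norm_conjC (z k0 0)) -normrM -tE normCK (_ : (toC t)^* = toC t) //.
  exact: conjc_real.
apply: (@le_trans _ _ (toC (d 0 k0) * `|y k0 0| ^+ 2)).
  rewrite (bigD1 k0) //= gerDl; apply: sumr_le0 => k kk0.
  by rewrite mulr_le0_ge0 ?exprn_ge0 // lecR d_le0.
by rewrite d_k0 yE !rmorphM fmorphV mulrA expr2 mulrAC.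
Qed.

Lemma spectral_X_set_eigen (l : R) (u : 'cV[R]_n) :
  (#|[set k | (0 < d 0 k)%R]| <= 1)%N -> 0 < l -> A *m u = l *: u -> u != 0 ->
  X_set A (Num.sqrt (l / (u^T *m u) 0 0) *: u).
Proof.
move=> pos_le1 l_gt0 Au u_neq0; apply: X_set_qform_le => // v.
have u_norm_ge0 : 0 <= (u^T *m u) 0 0.
  by rewrite mxE sumr_ge0 // => k _; rewrite mxE -expr2 sqr_ge0.
rewrite linearZ /= -scalemxAl [X in _ <= X ^+ 2]mxE exprMn sqr_sqrtr.
  exact: spectral_qform_le_rank1.
by rewrite divr_ge0 // ltW.
Qed.

End SpectralForm.

Theorem lemma1 (R : realType) (n : nat) (A : 'M[R]_n) (s : seq R) :
  (2 <= n)%N -> A^T = A -> eigenvalues_desc A s ->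
  ((exists x : 'cV[R]_n, X_set A x) <-> s`_1 <= 0).
Proof.
move=> n_ge2 A_sym [size_s [sorted_s charA]].
have [P [d [P_unitary A_spectral s_perm]]] := symmetric_spectral A_sym charA.
rewrite -count_gt0_le1_sorted ?size_s // (permP s_perm) count_map -card_set_count.
split=> [[x] | pos_le1]; first exact: (spectral_X_set_card_gt0 P_unitary A_spectral).
have [head_le0 | head_gt0] := leP s`_0 0.
  exists 0; apply: spectral_X_set0 A_sym A_spectral _ => k.
  apply: le_trans head_le0; apply: sorted_le_head sorted_s _.
  by rewrite (perm_mem s_perm) map_f ?mem_enum.
have [u Au u_neq0] : exists2 u : 'cV_n, A *m u = s`_0 *: u & u != 0.
  have /eigenvalueP[w wA w_neq0] : eigenvalue A s`_0.
    by rewrite eigenvalue_root_char charA root_prod_XsubC mem_nth // size_s ltnW.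
  by exists w^T; rewrite ?trmx_eq0 // -A_sym -trmx_mul wA linearZ.
exists (Num.sqrt (s`_0 / (u^T *m u) 0 0) *: u).
exact: (spectral_X_set_eigen A_sym P_unitary A_spectral pos_le1 head_gt0 Au u_neq0).
Qed.
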